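(* Let $p,q\in\mathbb{R}$ with $q<0$ and $p<0$, and let $D=\frac{p^3}{27}+\frac{q^2}{4}$. Let $x_1,x_2,x_3\in\mathbb{C}$ be the solutions of $x^3+px+q=0$. Then: (1) if $D\ge0$, $|x_i|\le\frac83+\frac13|q|+\frac1{12}q^2+\frac1{81}p^3$ for each $i$; (2) if $D<0$, $|x_i|\le 3+\frac16q^2+\frac1{81}|p|^3$ for each $i$.
   Context: The solutions are those given by Cardano's formula: $x_1=z_1+z_2$, $x_2=z_1+\lambda z_2$, $x_3=z_1+\lambda^2z_2$, with $z_1=\sqrt[3]{-\frac q2+\sqrt{D}}$, $z_2=\sqrt[3]{-\frac q2-\sqrt{D}}$ and $\lambda^3=1$. *)

From Stdlib Require Import Reals.
From Coquelicot Require Export Coquelicot.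
Open Scope R_scope.

Definition cubicD (p q : R) : R := p ^ 3 / 27 + q ^ 2 / 4.

Definition is_cubic_root (p q : R) (x : C) : Prop :=
  (x * x * x + RtoC p * x + RtoC q)%C = RtoC 0.

From Stdlib Require Import Reals Lra Psatz.
From Coquelicot Require Import Coquelicot.
Open Scope R_scope.

(* Every root satisfies |x|^3 = |p x + q| <= |p| |x| + |q|, so both bounds are
   statements about a real r >= 0 with r^3 <= s r + Q, where s = |p|, Q = |q|.
   If 4 s^3 <= 27 Q^2 (which is D >= 0 when p < 0) this forces r^3 <= 4 Q, and
   r <= 8/3 + r^3/12 gives the first bound.  In general either r^3 <= 2 Q or
   r^2 <= 2 s, and r <= 3 + r^6/648 gives the second. *)

Lemma Cmod_cubic_root_cube_le (p q : R) (x : C) :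
  is_cubic_root p q x -> Cmod x ^ 3 <= Rabs p * Cmod x + Rabs q.
Proof.
  intros Hx.
  assert (Hx3 : (x * x * x = - (RtoC p * x + RtoC q))%C).
  { replace (x * x * x)%C
      with ((x * x * x + RtoC p * x + RtoC q) - (RtoC p * x + RtoC q))%C by ring.
    rewrite Hx. ring. }
  replace (Cmod x ^ 3) with (Cmod (x * x * x)) by (rewrite !Cmod_mult; ring).
  rewrite Hx3, Cmod_opp, <- (Cmod_R p), <- (Cmod_R q), <- Cmod_mult.
  apply Cmod_triangle.
Qed.

Lemma le_8_3_add_cube (r : R) : 0 <= r -> r <= 8 / 3 + r ^ 3 / 12.
Proof.
  intros Hr.
  assert (0 <= (r - 2) ^ 2 * (r + 4)) by (apply Rmult_le_pos; [apply pow2_ge_0 | lra]).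
  nra.
Qed.

Lemma le_3_add_pow6 (r : R) : 0 <= r -> r <= 3 + r ^ 6 / 648.
Proof.
  intros Hr.
  destruct (Rle_or_lt r 3) as [Hr3 | Hr3].
  - assert (0 <= r ^ 6) by (apply pow_le; lra). lra.
  - assert (9 <= r ^ 2) by nra.
    assert (81 <= r ^ 4) by nra.
    assert (81 * r ^ 2 <= r ^ 6) by nra.
    nra.
Qed.

Section CauchyMajorant.

Variables r s Q : R.
Hypotheses (Hr : 0 <= r) (HQ : 0 <= Q) (Hmaj : r ^ 3 <= s * r + Q).

Lemma cube_le_4_mul_of_disc (Hdisc : 4 * s ^ 3 <= 27 * Q ^ 2) : r ^ 3 <= 4 * Q.
Proof.
  destruct (Rle_or_lt (r ^ 3) (4 * Q)) as [Hle | Hgt]; [exact Hle | exfalso].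
  assert (Hr0 : 0 < r) by (destruct Hr as [H | <-]; [exact H | nra]).
  assert (Hrs : 3 * r ^ 2 / 4 <= s).
  { apply (Rmult_le_reg_l r); [exact Hr0 | nra]. }
  assert (27 * r ^ 6 / 64 <= s ^ 3).
  { replace (27 * r ^ 6 / 64) with ((3 * r ^ 2 / 4) ^ 3) by field.
    apply pow_incr. nra. }
  nra.
Qed.

Lemma pow6_le_of_majorant : r ^ 6 <= 4 * Q ^ 2 \/ r ^ 6 <= 8 * s ^ 3.
Proof.
  destruct (Rle_or_lt (r ^ 3) (2 * Q)) as [HrQ | HrQ].
  - left. assert (0 <= r ^ 3) by (apply pow_le; lra). nra.
  - right.
    assert (Hr0 : 0 < r) by (destruct Hr as [H | <-]; [exact H | nra]).
    assert (Hrs : r ^ 2 / 2 <= s).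
    { apply (Rmult_le_reg_l r); [exact Hr0 | nra]. }
    replace (r ^ 6) with (8 * (r ^ 2 / 2) ^ 3) by field.
    apply Rmult_le_compat_l; [lra |].
    apply pow_incr. nra.
Qed.

Lemma majorant_le_of_disc (Hdisc : 4 * s ^ 3 <= 27 * Q ^ 2) :
  r <= 8 / 3 + Q / 3 + (Q ^ 2 / 12 - s ^ 3 / 81).
Proof.
  pose proof (le_8_3_add_cube r Hr).
  pose proof (cube_le_4_mul_of_disc Hdisc).
  lra.
Qed.

Lemma majorant_le (Hs : 0 <= s) : r <= 3 + Q ^ 2 / 6 + s ^ 3 / 81.
Proof.
  pose proof (le_3_add_pow6 r Hr).
  assert (0 <= r ^ 6) by (apply pow_le; lra).
  assert (0 <= Q ^ 2) by apply pow2_ge_0.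
  assert (0 <= s ^ 3) by (apply pow_le; lra).
  destruct pow6_le_of_majorant; lra.
Qed.

End CauchyMajorant.

Theorem mainTheorem10 (p q : R) (hq : q < 0) (hp : p < 0) :
  (0 <= cubicD p q ->
     forall x : C, is_cubic_root p q x ->
       Cmod x <= 8 / 3 + 1 / 3 * Rabs q + 1 / 12 * q ^ 2 + 1 / 81 * p ^ 3) /\
  (cubicD p q < 0 ->
     forall x : C, is_cubic_root p q x ->
       Cmod x <= 3 + 1 / 6 * q ^ 2 + 1 / 81 * Rabs p ^ 3).
Proof.
  pose proof (Rabs_pos p) as Hp0. pose proof (Rabs_pos q) as Hq0.
  rewrite <- (pow2_abs q).
  split; intros HD x Hx;
    pose proof (Cmod_cubic_root_cube_le p q x Hx) as Hmaj;
    pose proof (Cmod_ge_0 x) as Hx0.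
  - assert (Hp3 : p ^ 3 = - Rabs p ^ 3) by (rewrite (Rabs_left p hp); ring).
    assert (Hdisc : 4 * Rabs p ^ 3 <= 27 * Rabs q ^ 2).
    { unfold cubicD in HD. rewrite Hp3, <- (pow2_abs q) in HD. lra. }
    pose proof (majorant_le_of_disc _ _ _ Hx0 Hq0 Hmaj Hdisc).
    lra.
  - pose proof (majorant_le _ _ _ Hx0 Hq0 Hmaj Hp0).
    lra.
Qed.
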